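(* Let $X$ and $Y$ be independent nonnegative random variables with continuous distributions $F$ and $G$, and let $H$ be the distribution of $XY$. Suppose that $$\overline F(x-1/x)\sim\overline F(x)\quad\text{and}\quad \overline G(x-1/x)\sim\overline G(x),$$ and that there exists a function $a:[0,\infty)\to(0,\infty)$ such that $a(x)\uparrow\infty$, $x/a(x)\uparrow\infty$, $$\overline G\big(a(x)\big)=O\big(\overline H(x)\big)\quad\text{and}\quad \overline F\big(a(x)\big)=O\big(\overline H(x)\big).$$ Then $H\in\mathcal L$.
   Context: For a distribution $V$, $\overline V=1-V$ denotes its tail. All limits are as $x\to\infty$; $f(x)\sim g(x)$ means $f(x)/g(x)\to1$ and $f(x)=O(g(x))$ means $\limsup f(x)/g(x)<\infty$. The notation $a(x)\uparrow\infty$ means $a$ is nondecreasing and tends to infinity. A distribution $V$ is long-tailed, $V\in\mathcal L$, if $\overline V(x)>0$ for all $x$ and $\overline V(x-t)\sim\overline V(x)$ for every real $t$. *)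

From Stdlib Require Import Reals.
Open Scope R_scope.

Record prob_space := {
  Omega : Type;
  meas : (Omega -> Prop) -> Prop;
  Pr : (Omega -> Prop) -> R;
  meas_full : meas (fun _ => True);
  meas_compl : forall A, meas A -> meas (fun w => ~ A w);
  meas_union : forall A : nat -> Omega -> Prop,
      (forall n, meas (A n)) -> meas (fun w => exists n, A n w);
  Pr_nonneg : forall A, meas A -> 0 <= Pr A;
  Pr_full : Pr (fun _ => True) = 1;
  Pr_sigma_additive : forall A : nat -> Omega -> Prop,
      (forall n, meas (A n)) ->
      (forall m n, m <> n -> forall w, A m w -> A n w -> False) ->
      infinite_sum (fun n => Pr (A n)) (Pr (fun w => exists n, A n w))
}.

Definition sigma_algebra_R (S : (R -> Prop) -> Prop) : Prop :=
  S (fun _ => True) /\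
  (forall B, S B -> S (fun x => ~ B x)) /\
  (forall B : nat -> R -> Prop, (forall n, S (B n)) -> S (fun x => exists n, B n x)).

Definition borel (B : R -> Prop) : Prop :=
  forall S, sigma_algebra_R S -> (forall a, S (fun x => x <= a)) -> S B.

Definition random_variable (Ps : prob_space) (X : Omega Ps -> R) : Prop :=
  forall B, borel B -> meas Ps (fun w => B (X w)).

Definition independent (Ps : prob_space) (X Y : Omega Ps -> R) : Prop :=
  forall B1 B2, borel B1 -> borel B2 ->
    Pr Ps (fun w => B1 (X w) /\ B2 (Y w)) =
    Pr Ps (fun w => B1 (X w)) * Pr Ps (fun w => B2 (Y w)).

Definition distr (Ps : prob_space) (X : Omega Ps -> R) (x : R) : R :=
  Pr Ps (fun w => X w <= x).

Definition tail (V : R -> R) (x : R) : R := 1 - V x.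

Definition asymp_eq (f g : R -> R) : Prop :=
  forall eps, 0 < eps -> exists M, forall x, M <= x -> Rabs (f x / g x - 1) < eps.

Definition big_O (f g : R -> R) : Prop :=
  exists C M, forall x, M <= x -> Rabs (f x) <= C * Rabs (g x).

Definition tends_to_infty (f : R -> R) : Prop :=
  forall K, exists M, forall x, M <= x -> K <= f x.

Definition nondecr_on_nonneg (f : R -> R) : Prop :=
  forall x y, 0 <= x -> x <= y -> f x <= f y.

Definition long_tailed (V : R -> R) : Prop :=
  (forall x, 0 < tail V x) /\
  (forall t, asymp_eq (fun x => tail V (x - t)) (tail V)).

(* Long-tailedness
   of H amounts to P(x - t < XY <= x) = o(Hbar(x)) for each t > 0.  On this window X or Y exceeds
   sqrt(x - t); by symmetry consider X.  Cut the range of X into cells [s, s'] fine enough that, on a cell,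
   the window confines Y to ((x - t)/s', x/s], an interval ending at y = x/s whose length is O(1/y)
   for large y and arbitrarily small for bounded y.
   - For sqrt(x - t) < X <= x/Z0, y >= Z0 is large, so Gbar(y - k/y) ~ Gbar(y) makes the probability of
     the interval at most eps Gbar(y); summed against P(X in cell) this is at most eps Hbar(x).
   - For x/Z0 < X <= Kx, y lies in a compact set and the interval is short, so uniform continuity of G
     bounds the total by eps Fbar(x/Z0).
   - For X > Kx, Y < 1/K, and continuity of G at 0 bounds the total by eps Fbar(x/Z0).
   Finally Fbar(x/Z0) <= Fbar(a(x)) = O(Hbar(x)), as a(x) <= x/Z0 eventually. *)

From Stdlib Require Import Reals Lra Lia ZArith Classical FunctionalExtensionality PropExtensionality.
Open Scope R_scope.

Lemma pred_ext {T : Type} (A B : T -> Prop) : (forall w, A w <-> B w) -> A = B.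
Proof.
  intros H; apply functional_extensionality; intros w.
  apply propositional_extensionality, H.
Qed.

Lemma infinite_sum_const_eq0 p : infinite_sum (fun _ => p) p -> p = 0.
Proof.
  intros Hsum; apply NNPP; intros Hp.
  assert (Habs : 0 < Rabs p) by (apply Rabs_pos_lt, Hp).
  destruct (Hsum (Rabs p / 4)) as [N HN]; [lra|].
  pose proof (HN N (le_n N)) as H1; pose proof (HN (S N) (le_S _ _ (le_n N))) as H2.
  unfold Rdist in H1, H2; rewrite sum_cte in H1, H2.
  replace (p * INR (S (S N)) - p) with (p + (p * INR (S N) - p)) in H2
    by (rewrite (S_INR (S N)); ring).
  set (b := p * INR (S N) - p) in *.
  pose proof (Rabs_triang (p + b) (- b)) as H3.
  rewrite Rabs_Ropp in H3; replace (p + b + - b) with p in H3 by ring.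
  lra.
Qed.

Fixpoint sum_below (f : nat -> R) (n : nat) : R :=
  match n with O => 0 | S m => sum_below f m + f m end.

Lemma sum_below_le f g n : (forall i, (i < n)%nat -> f i <= g i) -> sum_below f n <= sum_below g n.
Proof.
  induction n as [|n IH]; simpl; intros H; [lra|].
  pose proof (H n ltac:(lia)); pose proof (IH ltac:(intros; apply H; lia)); lra.
Qed.

Lemma sum_below_scal c f n : sum_below (fun i => c * f i) n = c * sum_below f n.
Proof. induction n as [|n IH]; simpl; [ring|rewrite IH; ring]. Qed.

Lemma sum_below_ext f g n : (forall i, f i = g i) -> sum_below f n = sum_below g n.
Proof. intros H; induction n as [|n IH]; simpl; [ring|rewrite IH, H; ring]. Qed.

Section Events.
Variable Ps : prob_space.
Implicit Types A B : Omega Ps -> Prop.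

Lemma meas_ext A B : (forall w, A w <-> B w) -> meas Ps A -> meas Ps B.
Proof. intros H; rewrite (pred_ext A B H); auto. Qed.

Lemma Pr_ext A B : (forall w, A w <-> B w) -> Pr Ps A = Pr Ps B.
Proof. intros H; rewrite (pred_ext A B H); auto. Qed.

Lemma meas_False : meas Ps (fun _ => False).
Proof. apply (meas_ext (fun w => ~ True)); [tauto|]. apply meas_compl, meas_full. Qed.

Lemma meas_or A B : meas Ps A -> meas Ps B -> meas Ps (fun w => A w \/ B w).
Proof.
  intros HA HB.
  apply (meas_ext (fun w => exists n : nat, (match n with O => A | _ => B end) w)).
  - intros w; split; [intros [[|n] H]; auto|intros [H|H]; [exists O|exists 1%nat]; auto].
  - apply meas_union; intros [|n]; auto.
Qed.

Lemma meas_and A B : meas Ps A -> meas Ps B -> meas Ps (fun w => A w /\ B w).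
Proof.
  intros HA HB.
  apply (meas_ext (fun w => ~ (~ A w \/ ~ B w))).
  - intros w; split; [intros H; split; apply NNPP; tauto|tauto].
  - apply meas_compl, meas_or; apply meas_compl; auto.
Qed.

Lemma Pr_False : Pr Ps (fun _ => False) = 0.
Proof.
  apply infinite_sum_const_eq0.
  assert (H := Pr_sigma_additive Ps (fun _ _ => False) (fun _ => meas_False) ltac:(tauto)).
  cbv beta in H; rewrite (Pr_ext (fun w => exists n : nat, False) (fun _ => False)) in H by firstorder.
  exact H.
Qed.

Lemma Pr_or_disjoint A B : meas Ps A -> meas Ps B -> (forall w, A w -> B w -> False) ->
  Pr Ps (fun w => A w \/ B w) = Pr Ps A + Pr Ps B.
Proof.
  intros HA HB Hdisj.
  set (C := fun n : nat => match n with O => A | 1%nat => B | _ => fun _ => False end).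
  assert (HC : forall n, meas Ps (C n)) by (intros [|[|n]]; simpl; auto using meas_False).
  assert (HCdisj : forall m n, m <> n -> forall w, C m w -> C n w -> False).
  { intros [|[|m]] [|[|n]] Hmn w; simpl; try tauto; try lia; eauto. }
  assert (Hsum := Pr_sigma_additive Ps C HC HCdisj).
  rewrite (Pr_ext _ (fun w => A w \/ B w)) in Hsum.
  2:{ intros w; split; [intros [[|[|n]] Hn]; simpl in Hn; tauto
                       |intros [H|H]; [exists O|exists 1%nat]; auto]. }
  apply (uniqueness_sum (fun n => Pr Ps (C n))); auto.
  intros eps Heps; exists 1%nat; intros n Hn.
  replace (sum_f_R0 (fun n => Pr Ps (C n)) n) with (Pr Ps A + Pr Ps B).
  { unfold Rdist; rewrite Rminus_diag, Rabs_R0; lra. }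
  induction n as [|n IH]; [lia|]. destruct n; [simpl; ring|].
  rewrite tech5, <- IH by lia. simpl. rewrite Pr_False; ring.
Qed.

Lemma Pr_incl A B : meas Ps A -> meas Ps B -> (forall w, A w -> B w) -> Pr Ps A <= Pr Ps B.
Proof.
  intros HA HB HAB.
  assert (HBA : meas Ps (fun w => B w /\ ~ A w)) by (apply meas_and, meas_compl; auto).
  rewrite (Pr_ext B (fun w => A w \/ (B w /\ ~ A w))).
  2:{ intros w; split; [intros h; destruct (classic (A w)); tauto|intros [h|h]; [auto|tauto]]. }
  rewrite Pr_or_disjoint by (auto; tauto).
  pose proof (Pr_nonneg Ps _ HBA); lra.
Qed.

Lemma Pr_le_add A B C : meas Ps A -> meas Ps B -> meas Ps C -> (forall w, A w -> B w \/ C w) ->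
  Pr Ps A <= Pr Ps B + Pr Ps C.
Proof.
  intros HA HB HC HABC.
  assert (HCB : meas Ps (fun w => C w /\ ~ B w)) by (apply meas_and, meas_compl; auto).
  apply Rle_trans with (Pr Ps (fun w => B w \/ (C w /\ ~ B w))).
  - apply Pr_incl; auto using meas_or.
    intros w Hw; destruct (classic (B w)); [left|right]; auto; destruct (HABC w Hw); tauto.
  - rewrite Pr_or_disjoint by (auto; tauto).
    pose proof (Pr_incl _ _ HCB HC (fun w h => proj1 h)); lra.
Qed.

Lemma Pr_le_add3 A B C D : meas Ps A -> meas Ps B -> meas Ps C -> meas Ps D ->
  (forall w, A w -> B w \/ C w \/ D w) -> Pr Ps A <= Pr Ps B + Pr Ps C + Pr Ps D.
Proof.
  intros HA HB HC HD HABCD.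
  assert (HCD : meas Ps (fun w => C w \/ D w)) by (apply meas_or; auto).
  pose proof (Pr_le_add _ _ _ HA HB HCD HABCD); pose proof (Pr_le_add _ _ _ HCD HC HD (fun w h => h)).
  lra.
Qed.

Lemma Pr_not A : meas Ps A -> Pr Ps (fun w => ~ A w) = 1 - Pr Ps A.
Proof.
  intros HA. rewrite <- (Pr_full Ps).
  rewrite (Pr_ext (fun _ => True) (fun w => A w \/ ~ A w)) by (intros w; split; auto; intros _; apply classic).
  rewrite Pr_or_disjoint by (auto using meas_compl; tauto). ring.
Qed.

Lemma meas_exists_below (A : nat -> Omega Ps -> Prop) n : (forall i, meas Ps (A i)) ->
  meas Ps (fun w => exists i, (i < n)%nat /\ A i w).
Proof.
  intros HA; induction n as [|n IH].
  - apply (meas_ext (fun _ => False)); [intros w; split; [tauto|intros [i [h _]]; lia]|apply meas_False].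
  - apply (meas_ext (fun w => (exists i, (i < n)%nat /\ A i w) \/ A n w)); [|apply meas_or; auto].
    intros w; split.
    + intros [[i [h1 h2]]|h]; [exists i; split; auto; lia|exists n; auto].
    + intros [i [h1 h2]]; destruct (Nat.eq_dec i n); [subst; auto|left; exists i; split; auto; lia].
Qed.

Lemma Pr_exists_below_disjoint (A : nat -> Omega Ps -> Prop) n : (forall i, meas Ps (A i)) ->
  (forall i j w, i <> j -> A i w -> A j w -> False) ->
  Pr Ps (fun w => exists i, (i < n)%nat /\ A i w) = sum_below (fun i => Pr Ps (A i)) n.
Proof.
  intros HA Hdisj; induction n as [|n IH]; simpl.
  - rewrite <- Pr_False; apply Pr_ext; intros w; split; [intros [i [h _]]; lia|tauto].
  - rewrite <- IH, <- Pr_or_disjoint; auto using meas_exists_below.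
    + apply Pr_ext; intros w; split.
      * intros [i [h1 h2]]; destruct (Nat.eq_dec i n); [subst; auto|left; exists i; split; auto; lia].
      * intros [[i [h1 h2]]|h]; [exists i; split; auto; lia|exists n; auto].
    + intros w [i [h1 h2]] h; apply (Hdisj i n w); auto; lia.
Qed.

End Events.

Lemma borel_ext A B : (forall x, A x <-> B x) -> borel A -> borel B.
Proof. intros H; rewrite (pred_ext A B H); auto. Qed.

Lemma borel_le a : borel (fun x => x <= a).
Proof. intros S HS Hrays; auto. Qed.

Lemma borel_compl B : borel B -> borel (fun x => ~ B x).
Proof. intros HB S HS Hrays; apply (proj1 (proj2 HS)), HB; auto. Qed.

Lemma borel_union (B : nat -> R -> Prop) : (forall n, borel (B n)) -> borel (fun x => exists n, B n x).
Proof. intros HB S HS Hrays; apply (proj2 (proj2 HS)); intros n; apply HB; auto. Qed.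

Lemma borel_and A B : borel A -> borel B -> borel (fun x => A x /\ B x).
Proof.
  intros HA HB.
  apply (borel_ext (fun x => ~ exists n : nat, ~ (match n with O => A | _ => B end) x)).
  - intros x; split.
    + intros H; split; apply NNPP; intros Hn; apply H; [exists O|exists 1%nat]; auto.
    + intros [H1 H2] [[|n] Hn]; auto.
  - apply borel_compl, borel_union; intros [|n]; apply borel_compl; auto.
Qed.

Lemma borel_gt a : borel (fun x => a < x).
Proof. apply (borel_ext (fun x => ~ x <= a)); [intros; lra|apply borel_compl, borel_le]. Qed.

Lemma borel_oc a b : borel (fun x => a < x <= b).
Proof. apply borel_and; [apply borel_gt|apply borel_le]. Qed.

Lemma Rle_div_iff a b c : 0 < c -> (a <= b / c <-> a * c <= b).
Proof.
  intros Hc; unfold Rdiv; split; intros H.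
  - apply Rmult_le_compat_r with (r := c) in H; [|lra]. rewrite Rmult_assoc, Rinv_l in H; lra.
  - apply Rmult_le_reg_r with c; auto. rewrite Rmult_assoc, Rinv_l; lra.
Qed.

Lemma Rlt_div_iff a b c : 0 < c -> (a < b / c <-> a * c < b).
Proof.
  intros Hc; unfold Rdiv; split; intros H.
  - apply Rmult_lt_compat_r with (r := c) in H; auto. rewrite Rmult_assoc, Rinv_l in H; lra.
  - apply Rmult_lt_reg_r with c; auto. rewrite Rmult_assoc, Rinv_l; lra.
Qed.

Lemma Rdiv_le_iff a b c : 0 < c -> (a / c <= b <-> a <= b * c).
Proof.
  intros Hc; unfold Rdiv; split; intros H.
  - apply Rmult_le_compat_r with (r := c) in H; [|lra]. rewrite Rmult_assoc, Rinv_l in H; lra.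
  - apply Rmult_le_reg_r with c; auto. rewrite Rmult_assoc, Rinv_l; lra.
Qed.

Lemma Rdiv_lt_iff a b c : 0 < c -> (a / c < b <-> a < b * c).
Proof.
  intros Hc; unfold Rdiv; split; intros H.
  - apply Rmult_lt_compat_r with (r := c) in H; auto. rewrite Rmult_assoc, Rinv_l in H; lra.
  - apply Rmult_lt_reg_r with c; auto. rewrite Rmult_assoc, Rinv_l; lra.
Qed.

Lemma Rinv_le_mult_ge1 K Z : 0 < Z -> / Z <= K -> 1 <= K * Z.
Proof. intros HZ HK; apply Rmult_le_compat_r with (r := Z) in HK; [|lra]; rewrite Rinv_l in HK; lra. Qed.

Lemma Rdiv_le_contravar a b c : 0 <= a -> 0 < b -> b <= c -> a / c <= a / b.
Proof. intros Ha Hb Hbc; apply Rmult_le_compat_l; auto; apply Rinv_le_contravar; auto. Qed.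

Lemma Rdiv_nonneg a b : 0 <= a -> 0 < b -> 0 <= a / b.
Proof. intros Ha Hb; apply Rmult_le_pos; auto; left; apply Rinv_0_lt_compat, Hb. Qed.

Lemma exists_nat_gt r : exists n : nat, r < INR n.
Proof.
  destruct (archimed (Rabs r)) as [H _].
  exists (Z.to_nat (up (Rabs r))).
  rewrite INR_IZR_INZ, Z2Nat.id; [pose proof (RRle_abs r); lra|].
  apply le_IZR; pose proof (Rabs_pos r); lra.
Qed.

Lemma exists_ratio_between a b : 0 <= a < b ->
  exists n m : nat, a < INR (S m) / INR (S n) < b.
Proof.
  intros [Ha Hab].
  destruct (exists_nat_gt (/ (b - a))) as [n Hn].
  assert (HN : 0 < INR (S n)) by (apply lt_0_INR; lia).
  assert (Hinv : / INR (S n) < b - a).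
  { rewrite <- (Rinv_inv (b - a)); apply Rinv_lt_contravar.
    - apply Rmult_lt_0_compat; [apply Rinv_0_lt_compat; lra|auto].
    - rewrite S_INR; lra. }
  set (z := a * INR (S n)).
  destruct (archimed z) as [Hup1 Hup2].
  assert (Hpos : (0 < up z)%Z) by (apply lt_IZR; unfold z in *; nra).
  exists n, (Z.to_nat (up z) - 1)%nat.
  replace (INR (S (Z.to_nat (up z) - 1))) with (IZR (up z))
    by (rewrite INR_IZR_INZ; f_equal; lia).
  split.
  - apply Rlt_div_iff; auto.
  - apply Rdiv_lt_iff; auto.
    replace (b * INR (S n)) with (z + (b - a) * INR (S n)) by (unfold z; ring).
    assert (1 < (b - a) * INR (S n)); [|lra].
    apply Rmult_lt_reg_r with (/ INR (S n)); [apply Rinv_0_lt_compat; auto|].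
    rewrite Rmult_assoc, Rinv_r; lra.
Qed.

Section Product.
Variable Ps : prob_space.
Variables X Y : Omega Ps -> R.
Hypothesis HX : random_variable Ps X.
Hypothesis HY : random_variable Ps Y.
Hypothesis HXnn : forall w, 0 <= X w.
Hypothesis HYnn : forall w, 0 <= Y w.

(* [r < XY] is the countable union of the rectangles [q < X, r / q < Y] over positive rationals [q]. *)
Lemma meas_prod_gt r : meas Ps (fun w => r < X w * Y w).
Proof.
  destruct (Rlt_or_le r 0) as [Hr|Hr].
  { apply (meas_ext Ps (fun _ => True)); [|apply meas_full].
    intros w; split; auto; intros _; pose proof (Rmult_le_pos _ _ (HXnn w) (HYnn w)); lra. }
  set (q := fun n m : nat => INR (S m) / INR (S n)).
  assert (Hq : forall n m, 0 < q n m) by (intros; apply Rdiv_lt_0_compat; apply lt_0_INR; lia).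
  apply (meas_ext Ps (fun w => exists n m, q n m < X w /\ r / q n m < Y w)).
  - intros w; split.
    + intros [n [m [H1 H2]]]; specialize (Hq n m).
      apply Rdiv_lt_iff in H2; auto. pose proof (HYnn w); nra.
    + intros H.
      assert (HYpos : 0 < Y w) by (destruct (HYnn w) as [h|h]; auto; rewrite <- h in H; lra).
      assert (HXgt : r / Y w < X w) by (apply Rdiv_lt_iff; auto).
      destruct (exists_ratio_between (r / Y w) (X w)) as [n [m [H1 H2]]];
        [split; auto; apply Rdiv_nonneg; auto|].
      exists n, m; split; auto.
      apply (Rdiv_lt_iff r (q n m) (Y w) HYpos) in H1.
      apply Rdiv_lt_iff; [apply Hq|]; nra.
  - apply meas_union; intros n; apply meas_union; intros m.
    apply meas_and; [apply (HX (fun x => q n m < x))|apply (HY (fun x => r / q n m < x))]; apply borel_gt.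
Qed.

Lemma meas_prod_le r : meas Ps (fun w => X w * Y w <= r).
Proof. apply (meas_ext Ps (fun w => ~ r < X w * Y w)); [intros; lra|apply meas_compl, meas_prod_gt]. Qed.

End Product.

Lemma rv_meas_le Ps X : random_variable Ps X -> forall r, meas Ps (fun w => X w <= r).
Proof. intros HX r; apply (HX (fun x => x <= r)), borel_le. Qed.

Section DistributionTail.
Variable Ps : prob_space.
Variable Z : Omega Ps -> R.
Hypothesis HZ : forall r, meas Ps (fun w => Z w <= r).

Lemma meas_gt r : meas Ps (fun w => r < Z w).
Proof. apply (meas_ext Ps (fun w => ~ Z w <= r)); [intros; lra|apply meas_compl, HZ]. Qed.

Lemma tail_Pr r : tail (distr Ps Z) r = Pr Ps (fun w => r < Z w).
Proof. unfold tail, distr; rewrite <- Pr_not by auto; apply Pr_ext; intros; lra. Qed.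

Lemma tail_nonneg r : 0 <= tail (distr Ps Z) r.
Proof. rewrite tail_Pr; apply Pr_nonneg, meas_gt. Qed.

Lemma tail_antitone r s : r <= s -> tail (distr Ps Z) s <= tail (distr Ps Z) r.
Proof. intros H; rewrite !tail_Pr; apply Pr_incl; try apply meas_gt; intros; lra. Qed.

Lemma Pr_oc_tail a b : a <= b ->
  Pr Ps (fun w => a < Z w <= b) = tail (distr Ps Z) a - tail (distr Ps Z) b.
Proof.
  intros H; rewrite !tail_Pr.
  rewrite (Pr_ext Ps (fun w => a < Z w) (fun w => (a < Z w <= b) \/ b < Z w)) by (intros; lra).
  rewrite Pr_or_disjoint; [ring|apply meas_and|apply meas_gt|intros; lra]; auto using meas_gt.
Qed.

End DistributionTail.

Lemma asymp_eq_upper (f g : R -> R) : asymp_eq f g -> (forall x, 0 < g x) ->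
  forall eps, 0 < eps -> exists M, forall x, M <= x -> f x <= (1 + eps) * g x.
Proof.
  intros Hfg Hg eps Heps; destruct (Hfg eps Heps) as [M HM]; exists M; intros x Hx.
  destruct (Rabs_def2 _ _ (HM x Hx)) as [H _].
  assert (f x / g x < 1 + eps) as H' by lra.
  apply Rdiv_lt_iff in H'; auto; lra.
Qed.

Section ShiftEquivalentTail.
Variable T : R -> R.
Hypothesis T_antitone : forall r s, r <= s -> T s <= T r.
Hypothesis T_nonneg : forall r, 0 <= T r.
Hypothesis T_shift : asymp_eq (fun x => T (x - / x)) T.

Lemma shift_equiv_tail_pos r : 0 < T r.
Proof.
  destruct (T_nonneg r) as [H|H]; auto; exfalso.
  destruct (T_shift (1/2) ltac:(lra)) as [M HM].
  set (y := Rmax M r).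
  assert (Hy : T y = 0).
  { pose proof (T_antitone r y (Rmax_r M r)); pose proof (T_nonneg y); lra. }
  (* the ratio at [y] is [0 / 0 = 0], not close to 1 *)
  specialize (HM y (Rmax_l M r)); rewrite Hy, Rdiv_0_r, Rminus_0_l, Rabs_Ropp, Rabs_R1 in HM.
  lra.
Qed.

Lemma shift_equiv_tail_nat n eps : 0 < eps -> exists M, 1 <= M /\
  forall y, M <= y -> T (y - INR n / y) <= (1 + eps) * T y.
Proof.
  revert eps; induction n as [|n IH]; intros eps Heps.
  - exists 1; split; [lra|]; intros y _; simpl.
    rewrite Rdiv_0_l, Rminus_0_r; pose proof (T_nonneg y); nra.
  - set (e := Rmin 1 eps / 3).
    assert (He : 0 < e) by (unfold e, Rmin; destruct Rle_dec; lra).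
    assert (Hee : (1 + e) * (1 + e) <= 1 + eps).
    { pose proof (Rmin_l 1 eps); pose proof (Rmin_r 1 eps); unfold e in *; nra. }
    destruct (IH e He) as [Mn [HMn1 HMn]].
    destruct (asymp_eq_upper _ _ T_shift shift_equiv_tail_pos e He) as [M1 HM1].
    exists (Rmax Mn (Rmax 1 M1 + INR n)); split; [pose proof (Rmax_l Mn (Rmax 1 M1 + INR n)); lra|].
    intros y Hy.
    pose proof (Rmax_l Mn (Rmax 1 M1 + INR n)); pose proof (Rmax_r Mn (Rmax 1 M1 + INR n)).
    pose proof (Rmax_l 1 M1); pose proof (Rmax_r 1 M1); pose proof (pos_INR n).
    set (z := y - INR n / y).
    assert (Hny : 0 <= INR n / y <= INR n).
    { assert (1 <= y) by lra.
      split; [apply Rdiv_nonneg; lra|apply Rdiv_le_iff; [lra|nra]]. }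
    (* one more step of size [1/y] fits into one step of size [1/z], since [z <= y] *)
    assert (Hstep : T (y - INR (S n) / y) <= T (z - / z)).
    { apply T_antitone; assert (/ y <= / z) by (apply Rinv_le_contravar; unfold z; lra).
      unfold z, Rdiv in *; rewrite S_INR; lra. }
    assert (Hz : T (z - / z) <= (1 + e) * T z) by (apply HM1; unfold z; lra).
    assert (Hzy : T z <= (1 + e) * T y) by (apply HMn; lra).
    pose proof (shift_equiv_tail_pos y).
    assert ((1 + e) * T z <= (1 + e) * ((1 + e) * T y)) by (apply Rmult_le_compat_l; lra).
    nra.
Qed.

Lemma shift_equiv_tail k eps : 0 <= k -> 0 < eps -> exists M, 1 <= M /\
  forall y, M <= y -> T (y - k / y) <= (1 + eps) * T y.
Proof.
  intros Hk Heps; destruct (exists_nat_gt k) as [n Hn].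
  destruct (shift_equiv_tail_nat n eps Heps) as [M [HM1 HM]]; exists M; split; auto.
  intros y Hy; eapply Rle_trans; [|apply HM; auto]; apply T_antitone.
  unfold Rdiv; assert (0 < / y) by (apply Rinv_0_lt_compat; lra); nra.
Qed.

End ShiftEquivalentTail.

Lemma Rabs_ratio_sub1_le p q eta : 0 < p -> 0 < q -> 0 <= eta ->
  q <= p <= (1 + eta) * q \/ p <= q <= (1 + eta) * p -> Rabs (p / q - 1) <= eta.
Proof.
  intros Hp Hq Heta [[H1 H2]|[H1 H2]].
  - assert (1 <= p / q) by (apply Rle_div_iff; lra).
    assert (p / q <= 1 + eta) by (apply Rdiv_le_iff; lra).
    rewrite Rabs_right; lra.
  - assert (p / q <= 1) by (apply Rdiv_le_iff; lra).
    assert (1 - eta <= p / q) by (apply Rle_div_iff; nra).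
    rewrite Rabs_left1; lra.
Qed.

Lemma asymp_eq_shift_of_increments (T : R -> R) :
  (forall r, 0 < T r) -> (forall r s, r <= s -> T s <= T r) ->
  (forall t eta, 0 < t -> 0 < eta -> exists M, forall x, M <= x -> T (x - t) - T x <= eta * T x) ->
  forall t, asymp_eq (fun x => T (x - t)) T.
Proof.
  intros Tpos Tanti Hinc t eps Heps.
  destruct (Rtotal_order t 0) as [Ht|[Ht|Ht]].
  - destruct (Hinc (- t) (eps / 2) ltac:(lra) ltac:(lra)) as [M HM]; exists M; intros x Hx.
    specialize (HM (x - t) ltac:(lra)); replace (x - t - - t) with x in HM by ring.
    eapply Rle_lt_trans; [apply Rabs_ratio_sub1_le with (eta := eps / 2)|]; auto; try lra.
    right; split; [apply Tanti|]; lra.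
  - exists 0; intros x _; subst t; rewrite Rminus_0_r, Rdiv_diag, Rminus_diag, Rabs_R0; auto.
    apply Rgt_not_eq, Tpos.
  - destruct (Hinc t (eps / 2) Ht ltac:(lra)) as [M HM]; exists M; intros x Hx.
    specialize (HM x Hx).
    eapply Rle_lt_trans; [apply Rabs_ratio_sub1_le with (eta := eps / 2)|]; auto; try lra.
    left; split; [apply Tanti|]; lra.
Qed.

Lemma big_O_at_fraction (T H a : R -> R) Z0 :
  (forall r s, r <= s -> T s <= T r) -> (forall r, 0 <= H r) ->
  (forall x, 0 <= x -> 0 < a x) -> tends_to_infty (fun x => x / a x) ->
  big_O (fun x => T (a x)) H -> 0 < Z0 ->
  exists C M, 0 < C /\ forall x, M <= x -> T (x / Z0) <= C * H x.
Proof.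
  intros Tanti Hnn Hapos Hxa [C [M HCM]] HZ0.
  destruct (Hxa Z0) as [M0 HM0].
  exists (Rmax C 1), (Rmax M (Rmax M0 0)); split; [pose proof (Rmax_r C 1); lra|].
  intros x Hx.
  pose proof (Rmax_l M (Rmax M0 0)); pose proof (Rmax_r M (Rmax M0 0)).
  pose proof (Rmax_l M0 0); pose proof (Rmax_r M0 0).
  assert (Ha : 0 < a x) by (apply Hapos; lra).
  assert (Hax : a x <= x / Z0).
  { specialize (HM0 x ltac:(lra)); apply Rle_div_iff in HM0; auto; apply Rle_div_iff; lra. }
  specialize (HCM x ltac:(lra)); rewrite (Rabs_right (H x)) in HCM by (apply Rle_ge; auto).
  pose proof (Rle_abs (T (a x))); pose proof (Tanti _ _ Hax); pose proof (Rmax_l C 1).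
  pose proof (Hnn x); nra.
Qed.

Lemma exists_grid A B h : A <= B -> 0 < h -> exists (s : nat -> R) (N : nat),
  s 0%nat = A /\ s N = B /\ Un_growing s /\ forall i, s (S i) <= s i + h.
Proof.
  intros HAB Hh; destruct (exists_nat_gt ((B - A) / h)) as [n Hn].
  assert (HN : 0 < INR (S n)) by (apply lt_0_INR; lia).
  set (d := (B - A) / INR (S n)).
  assert (Hd : 0 <= d <= h).
  { split; [apply Rdiv_nonneg; lra|]. apply Rdiv_le_iff; auto.
    apply Rdiv_lt_iff in Hn; auto; rewrite S_INR; nra. }
  exists (fun i => A + INR i * d), (S n); repeat split.
  - simpl; ring.
  - unfold d; field; lra.
  - intros i; rewrite S_INR; lra.
  - intros i; rewrite S_INR; lra.
Qed.

Lemma growing_cell_exists (s : nat -> R) N v : Un_growing s -> s 0%nat < v <= s N ->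
  exists i, (i < N)%nat /\ s i < v <= s (S i).
Proof.
  intros Hs; induction N as [|N IH]; intros Hv; [lra|].
  destruct (Rle_or_lt v (s N)) as [H|H].
  - destruct IH as [i [Hi Hcell]]; [lra|]; exists i; split; auto; lia.
  - exists N; split; [lia|lra].
Qed.

Lemma growing_cell_unique (s : nat -> R) i j v : Un_growing s ->
  s i < v <= s (S i) -> s j < v <= s (S j) -> i = j.
Proof.
  intros Hs Hi Hj; destruct (Nat.lt_total i j) as [H|[H|H]]; auto; exfalso.
  - pose proof (growing_prop s j (S i) Hs H); lra.
  - pose proof (growing_prop s i (S j) Hs H); lra.
Qed.

Lemma growing_between (s : nat -> R) N i : Un_growing s -> (i <= N)%nat -> s 0%nat <= s i <= s N.
Proof. intros Hs Hi; split; apply Rge_le, growing_prop; auto; lia. Qed.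

Lemma div_shift_lower_bound x t s s' h : 0 < s -> 0 <= h -> s <= s' <= s + h -> 0 <= t <= x ->
  x / s - (x * h + t * s) / (s * s) <= (x - t) / s'.
Proof.
  intros Hs Hh Hs' Ht.
  apply Rle_trans with ((x - t) / (s + h)); [|apply Rdiv_le_contravar; lra].
  replace (x / s - (x * h + t * s) / (s * s)) with ((x * s - x * h - t * s) / (s * s)) by (field; lra).
  apply Rdiv_le_iff; [nra|].
  replace ((x - t) / (s + h) * (s * s)) with ((x - t) * (s * s) / (s + h)) by (field; lra).
  apply Rle_div_iff; [lra|].
  assert (0 <= x * (h * h)) by (apply Rmult_le_pos; nra).
  assert (0 <= t * (s * h)) by (apply Rmult_le_pos; nra).
  nra.
Qed.

Section Cells.
Variable Ps : prob_space.
Variables X Y : Omega Ps -> R.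
Hypothesis HX : random_variable Ps X.
Hypothesis HY : random_variable Ps Y.
Hypothesis Hind : independent Ps X Y.
Hypothesis HXnn : forall w, 0 <= X w.
Hypothesis HYnn : forall w, 0 <= Y w.

Lemma meas_window x t : meas Ps (fun w => x - t < X w * Y w <= x).
Proof. apply meas_and; [apply meas_prod_gt|apply meas_prod_le]; auto. Qed.

Lemma Pr_window_cells_le (s : nat -> R) N x t (b : nat -> R) :
  Un_growing s -> 0 < s 0%nat -> 0 <= t <= x ->
  (forall i, (i < N)%nat -> Pr Ps (fun w => (x - t) / s (S i) < Y w <= x / s i) <= b i) ->
  Pr Ps (fun w => x - t < X w * Y w <= x /\ s 0%nat < X w <= s N) <=
  sum_below (fun i => Pr Ps (fun w => s i < X w <= s (S i)) * b i) N.
Proof.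
  intros Hs Hs0 Ht Hb.
  assert (Hpos : forall i, 0 < s i) by (intros i; pose proof (growing_prop s i 0 Hs ltac:(lia)); lra).
  set (cell := fun i w => s i < X w <= s (S i) /\ (x - t) / s (S i) < Y w <= x / s i).
  assert (Hcell : forall i, meas Ps (cell i)).
  { intros i; apply meas_and; [apply (HX (fun v => s i < v <= s (S i)))
                              |apply (HY (fun v => (x - t) / s (S i) < v <= x / s i))]; apply borel_oc. }
  apply Rle_trans with (Pr Ps (fun w => exists i, (i < N)%nat /\ cell i w)).
  - apply Pr_incl.
    + apply meas_and; [apply meas_window|apply (HX (fun v => s 0%nat < v <= s N)), borel_oc].
    + apply meas_exists_below; auto.
    + intros w [[H1 H2] HXw]; destruct (growing_cell_exists s N (X w) Hs HXw) as [i [Hi [Hc1 Hc2]]].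
      exists i; split; auto; split; [lra|]; pose proof (Hpos i); pose proof (Hpos (S i)); split.
      * apply Rdiv_lt_iff; auto; nra.
      * apply Rle_div_iff; auto; nra.
  - rewrite Pr_exists_below_disjoint; auto.
    + apply sum_below_le; intros i Hi; unfold cell.
      rewrite (Hind (fun v => s i < v <= s (S i)) (fun v => (x - t) / s (S i) < v <= x / s i))
        by apply borel_oc.
      apply Rmult_le_compat_l; auto; apply Pr_nonneg, (HX (fun v => s i < v <= s (S i))), borel_oc.
    + intros i j w Hij [H1 _] [H2 _]; apply Hij, (growing_cell_unique s i j (X w)); auto.
Qed.

Lemma sum_below_cells_tail_le (s : nat -> R) N x :
  Un_growing s -> 0 < s 0%nat -> 0 <= x ->
  sum_below (fun i => Pr Ps (fun w => s i < X w <= s (S i)) * Pr Ps (fun w => x / s i < Y w)) N <=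
  Pr Ps (fun w => x < X w * Y w).
Proof.
  intros Hs Hs0 Hx.
  assert (Hpos : forall i, 0 < s i) by (intros i; pose proof (growing_prop s i 0 Hs ltac:(lia)); lra).
  set (cell := fun i w => s i < X w <= s (S i) /\ x / s i < Y w).
  assert (Hcell : forall i, meas Ps (cell i)).
  { intros i; apply meas_and; [apply (HX (fun v => s i < v <= s (S i))), borel_oc
                              |apply (HY (fun v => x / s i < v)), borel_gt]. }
  replace (sum_below _ N) with (Pr Ps (fun w => exists i, (i < N)%nat /\ cell i w)).
  - apply Pr_incl; [apply meas_exists_below; auto|apply meas_prod_gt; auto|].
    intros w [i [_ [[H1 H2] H3]]]; pose proof (Hpos i).
    apply Rdiv_lt_iff in H3; auto; nra.
  - rewrite Pr_exists_below_disjoint; auto.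
    + apply sum_below_ext; intros i; unfold cell.
      apply (Hind (fun v => s i < v <= s (S i)) (fun v => x / s i < v)); [apply borel_oc|apply borel_gt].
    + intros i j w Hij [H1 _] [H2 _]; apply Hij, (growing_cell_unique s i j (X w)); auto.
Qed.

Lemma sum_below_cells_le (s : nat -> R) N : Un_growing s ->
  sum_below (fun i => Pr Ps (fun w => s i < X w <= s (S i))) N <= Pr Ps (fun w => s 0%nat < X w).
Proof.
  intros Hs; set (cell := fun i w => s i < X w <= s (S i)).
  assert (Hcell : forall i, meas Ps (cell i)) by (intros i; apply (HX (fun v => s i < v <= s (S i))), borel_oc).
  change (sum_below (fun i => Pr Ps (cell i)) N <= Pr Ps (fun w => s 0%nat < X w)).
  rewrite <- Pr_exists_below_disjoint; auto.
  - apply Pr_incl; [apply meas_exists_below; auto|apply (HX (fun v => s 0%nat < v)), borel_gt|].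
    intros w [i [_ [H1 H2]]]; pose proof (growing_prop s i 0 Hs ltac:(lia)); lra.
  - intros i j w Hij H1 H2; apply Hij, (growing_cell_unique s i j (X w)); auto.
Qed.

Lemma Pr_window_X_gt x t K : 0 < K -> 0 <= x ->
  Pr Ps (fun w => x - t < X w * Y w <= x /\ K < X w) <=
  Pr Ps (fun w => K < X w) * Pr Ps (fun w => Y w <= x / K).
Proof.
  intros HK Hx; rewrite <- (Hind (fun v => K < v) (fun v => v <= x / K)) by (apply borel_gt || apply borel_le).
  apply Pr_incl.
  - apply meas_and; [apply meas_window|apply (HX (fun v => K < v)), borel_gt].
  - apply meas_and; [apply (HX (fun v => K < v)), borel_gt|apply (HY (fun v => v <= x / K)), borel_le].
  - intros w [[H1 H2] H3]; split; auto; apply Rle_div_iff; auto; pose proof (HYnn w); nra.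
Qed.

Lemma Pr_Y_cell_le_tail_increment x t s s' h delta :
  0 < s -> 0 <= h -> s <= s' <= s + h -> 0 <= t <= x -> (x * h + t * s) / (s * s) <= delta ->
  Pr Ps (fun w => (x - t) / s' < Y w <= x / s) <=
  tail (distr Ps Y) (x / s - delta) - tail (distr Ps Y) (x / s).
Proof.
  intros Hs Hh Hs' Ht Hdelta.
  assert (Hshift := div_shift_lower_bound x t s s' h Hs Hh Hs' Ht).
  assert (0 <= (x * h + t * s) / (s * s)) by (apply Rdiv_nonneg; nra).
  rewrite <- Pr_oc_tail by (auto using rv_meas_le; lra).
  apply Pr_incl; [apply (HY (fun v => (x - t) / s' < v <= x / s))|apply (HY (fun v => x / s - delta < v <= x / s))|];
    try apply borel_oc.
  intros w; lra.
Qed.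

End Cells.

Lemma shift_error_large_regime x t s : 0 < t -> 2 * t <= x -> 1 <= s -> x - t <= s * s ->
  (x * / (x * x) + t * s) / (s * s) <= (2 * t + 2) / (x / s).
Proof.
  intros Ht Hx Hs Hss.
  replace ((x * / (x * x) + t * s) / (s * s)) with ((1 + t * s * x) / (x * (s * s))) by (field; nra).
  replace ((2 * t + 2) / (x / s)) with ((2 * t + 2) * (s * (s * s)) / (x * (s * s))) by (field; nra).
  apply Rmult_le_compat_r; [left; apply Rinv_0_lt_compat; nra|].
  (* [s^2 >= x - t >= x / 2] and [s >= 1] *)
  assert (t * s * x <= t * s * (2 * (s * s))) by (apply Rmult_le_compat_l; nra).
  assert (1 <= s * (s * s)) by nra.
  nra.
Qed.

Lemma shift_error_bounded_regime x t s d A : 0 < A <= s -> 0 < x -> 0 <= d -> t <= d * A / 2 ->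
  (x * (d * (A * A) / (2 * x)) + t * s) / (s * s) <= d.
Proof.
  intros HA Hx Hd Ht.
  replace (x * (d * (A * A) / (2 * x))) with (d / 2 * (A * A)) by (field; lra).
  apply Rdiv_le_iff; [nra|].
  assert (d / 2 * (A * A) <= d / 2 * (s * s)) by (apply Rmult_le_compat_l; nra).
  assert (t * s <= d / 2 * A * s) by (apply Rmult_le_compat_r; lra).
  assert (d / 2 * A <= d / 2 * s) by (apply Rmult_le_compat_l; lra).
  assert (d / 2 * A * s <= d / 2 * s * s) by (apply Rmult_le_compat_r; lra).
  nra.
Qed.

Lemma continuous_small_increments (f : R -> R) L eps : continuity f -> 0 < eps ->
  exists d, 0 < d /\ forall y, 0 <= y <= L -> f y - f (y - d) < eps.
Proof.
  intros Hf Heps.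
  destruct (Heine f (fun u => -1 <= u <= L + 1) (compact_P3 (-1) (L + 1)) (fun u _ => Hf u)
              (mkposreal eps Heps)) as [du Hdu]; simpl in Hdu.
  pose proof (cond_pos du) as Hdu0.
  exists (Rmin du 1 / 2); pose proof (Rmin_l du 1); pose proof (Rmin_r du 1).
  split; [unfold Rmin in *; destruct Rle_dec; lra|]; intros y Hy.
  assert (Hclose : Rabs (f y - f (y - Rmin du 1 / 2)) < eps); [|apply Rabs_def2 in Hclose; lra].
  apply Hdu; try (unfold Rmin in *; destruct Rle_dec; lra).
  replace (y - (y - Rmin du 1 / 2)) with (Rmin du 1 / 2) by ring.
  rewrite Rabs_right; unfold Rmin in *; destruct Rle_dec; lra.
Qed.

Lemma distr_small_near_0 Ps Y : (forall w, 0 <= Y w) -> continuity_pt (distr Ps Y) 0 ->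
  forall eps, 0 < eps -> exists delta, 0 < delta /\ distr Ps Y delta <= eps.
Proof.
  intros HYnn HGc eps Heps.
  destruct (HGc (eps / 2) ltac:(lra)) as [alpha [Halpha Hnear]].
  assert (HG : forall u, u <> 0 -> Rabs u < alpha -> Rabs (distr Ps Y u - distr Ps Y 0) < eps / 2).
  { intros u Hu Hua; apply (Hnear u); split; [split; [exact I|auto]|]. simpl; unfold Rdist; rewrite Rminus_0_r; auto. }
  exists (alpha / 2); split; [lra|].
  assert (Hneg : distr Ps Y (- (alpha / 2)) = 0).
  { unfold distr; rewrite <- (Pr_False Ps); apply Pr_ext; intros w; pose proof (HYnn w); split; lra. }
  pose proof (HG (alpha / 2) ltac:(lra) ltac:(rewrite Rabs_right; lra)) as H1.
  pose proof (HG (- (alpha / 2)) ltac:(lra) ltac:(rewrite Rabs_left; lra)) as H2.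
  rewrite Hneg in H2; apply Rabs_def2 in H1; apply Rabs_def2 in H2; lra.
Qed.

Section Window.
Variable Ps : prob_space.
Variables X Y : Omega Ps -> R.
Hypothesis HX : random_variable Ps X.
Hypothesis HY : random_variable Ps Y.
Hypothesis Hind : independent Ps X Y.
Hypothesis HXnn : forall w, 0 <= X w.
Hypothesis HYnn : forall w, 0 <= Y w.

Local Notation G := (distr Ps Y).
Local Notation TH := (tail (distr Ps (fun w => X w * Y w))).

Lemma Pr_window_Y_large t eps :
  asymp_eq (fun x => tail G (x - / x)) (tail G) -> 0 < t -> 0 < eps ->
  exists Z0, 1 <= Z0 /\ exists M, forall x, M <= x ->
  Pr Ps (fun w => x - t < X w * Y w <= x /\ sqrt (x - t) < X w <= x / Z0) <= eps * TH x.
Proof.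
  intros HGshift Ht Heps.
  set (k := 2 * t + 2).
  destruct (shift_equiv_tail (tail G) (tail_antitone Ps Y (rv_meas_le Ps Y HY))
              (tail_nonneg Ps Y (rv_meas_le Ps Y HY)) HGshift k eps ltac:(unfold k; lra) Heps)
    as [Z0 [HZ0 Hshift]].
  exists Z0; split; auto; exists (Rmax (2 * t) (Rmax (t + 1) (Z0 * Z0))); intros x Hx.
  pose proof (Rmax_l (2 * t) (Rmax (t + 1) (Z0 * Z0))); pose proof (Rmax_r (2 * t) (Rmax (t + 1) (Z0 * Z0))).
  pose proof (Rmax_l (t + 1) (Z0 * Z0)); pose proof (Rmax_r (t + 1) (Z0 * Z0)).
  set (c := sqrt (x - t)).
  assert (Hcc : c * c = x - t) by (apply sqrt_sqrt; lra).
  assert (Hc : 1 <= c) by (assert (0 <= c) by apply sqrt_pos; nra).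
  assert (HcB : c <= x / Z0).
  { apply Rle_div_iff; [lra|].
    assert (0 <= c * Z0) by nra.
    assert (c * Z0 * (c * Z0) <= x * x) by nra. nra. }
  destruct (exists_grid c (x / Z0) (/ (x * x)) HcB ltac:(apply Rinv_0_lt_compat; nra))
    as [s [N [Hs0 [HsN [Hs Hsh]]]]].
  rewrite <- Hs0, <- HsN.
  eapply Rle_trans.
  { apply Pr_window_cells_le with (b := fun i => eps * Pr Ps (fun w => x / s i < Y w)); auto; try lra.
    intros i Hi.
    pose proof (growing_between s N i Hs ltac:(lia)); pose proof (growing_between s N (S i) Hs Hi).
    rewrite Hs0, HsN in *.
    assert (Hsi : s i * Z0 <= x) by (apply Rle_div_iff; lra).
    assert (Hy : Z0 <= x / s i) by (apply Rle_div_iff; lra).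
    eapply Rle_trans;
      [apply (Pr_Y_cell_le_tail_increment Ps Y HY) with (h := / (x * x)) (delta := k / (x / s i))|].
    - lra.
    - left; apply Rinv_0_lt_compat; nra.
    - split; [apply Hs|apply Hsh].
    - lra.
    - apply shift_error_large_regime; try lra; nra.
    - rewrite <- (tail_Pr Ps Y (rv_meas_le Ps Y HY)).
      pose proof (Hshift (x / s i) Hy); lra. }
  rewrite (sum_below_ext _ (fun i => eps * (Pr Ps (fun w => s i < X w <= s (S i)) *
                                            Pr Ps (fun w => x / s i < Y w)))) by (intros; ring).
  rewrite sum_below_scal, (tail_Pr Ps _ (meas_prod_le Ps X Y HX HY HXnn HYnn)).
  apply Rmult_le_compat_l; [lra|]; apply sum_below_cells_tail_le; auto; lra.
Qed.

Lemma Pr_window_Y_bounded t Z0 K eps :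
  continuity G -> 0 < t -> 1 <= Z0 -> / Z0 <= K -> 0 < eps ->
  exists M, forall x, M <= x ->
  Pr Ps (fun w => x - t < X w * Y w <= x /\ x / Z0 < X w <= K * x) <= eps * Pr Ps (fun w => x / Z0 < X w).
Proof.
  intros HGc Ht HZ0 HK Heps.
  destruct (continuous_small_increments G Z0 eps HGc Heps) as [d [Hd HGd]].
  exists (Rmax (2 * t * Z0 / d) (t + 1)); intros x Hx.
  pose proof (Rmax_l (2 * t * Z0 / d) (t + 1)); pose proof (Rmax_r (2 * t * Z0 / d) (t + 1)).
  set (A := x / Z0).
  assert (HA : 0 < A) by (apply Rdiv_lt_0_compat; lra).
  (* the window in [XY] is short compared with the scale [A] of [X] *)
  assert (HtA : t <= d * A / 2).
  { unfold A; apply Rle_div_iff; [lra|]; rewrite Rmult_div_assoc; apply Rle_div_iff; [lra|].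
    assert (Hxd : 2 * t * Z0 / d <= x) by lra; apply Rdiv_le_iff in Hxd; [nra|tauto]. }
  assert (HKZ : 1 <= K * Z0) by (apply Rinv_le_mult_ge1; lra).
  assert (HAK : A <= K * x) by (apply Rdiv_le_iff; [lra|]; nra).
  destruct (exists_grid A (K * x) (d * (A * A) / (2 * x)) HAK ltac:(apply Rdiv_lt_0_compat; nra))
    as [s [N [Hs0 [HsN [Hs Hsh]]]]].
  rewrite <- Hs0, <- HsN.
  eapply Rle_trans.
  { apply Pr_window_cells_le with (b := fun _ => eps); auto; try lra.
    intros i Hi.
    pose proof (growing_between s N i Hs ltac:(lia)); pose proof (growing_between s N (S i) Hs Hi).
    rewrite Hs0, HsN in *.
    assert (Hy : 0 <= x / s i <= Z0).
    { split; [apply Rdiv_nonneg; lra|]. apply Rdiv_le_iff; [lra|].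
      assert (HAsi : A <= s i) by lra; unfold A in HAsi; apply Rdiv_le_iff in HAsi; nra. }
    eapply Rle_trans;
      [apply (Pr_Y_cell_le_tail_increment Ps Y HY) with (h := d * (A * A) / (2 * x)) (delta := d)|].
    - lra.
    - apply Rdiv_nonneg; nra.
    - split; [apply Hs|apply Hsh].
    - lra.
    - apply shift_error_bounded_regime; lra.
    - unfold tail; pose proof (HGd (x / s i) Hy); lra. }
  rewrite (sum_below_ext _ (fun i => eps * Pr Ps (fun w => s i < X w <= s (S i)))) by (intros; ring).
  rewrite sum_below_scal; apply Rmult_le_compat_l; [lra|]; apply sum_below_cells_le; auto.
Qed.

Lemma Pr_window_Y_small t eps :
  continuity G -> 0 < eps -> exists K0, 0 < K0 /\ forall K x, K0 <= K -> 0 < x ->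
  Pr Ps (fun w => x - t < X w * Y w <= x /\ K * x < X w) <= eps * Pr Ps (fun w => K * x < X w).
Proof.
  intros HGc Heps.
  destruct (distr_small_near_0 Ps Y HYnn (HGc 0) eps Heps) as [delta [Hdelta HGdelta]].
  exists (/ delta); split; [apply Rinv_0_lt_compat; auto|]; intros K x HK Hx.
  assert (HK0 : 0 < K) by (pose proof (Rinv_0_lt_compat delta Hdelta); lra).
  eapply Rle_trans; [apply Pr_window_X_gt; auto; nra|].
  replace (x / (K * x)) with (/ K) by (field; lra).
  assert (HGK : G (/ K) <= eps).
  { eapply Rle_trans; [|exact HGdelta].
    apply Rge_le, Rle_ge. unfold distr; apply Pr_incl; try apply (rv_meas_le Ps Y HY).
    intros w Hw; rewrite <- (Rinv_inv delta); eapply Rle_trans; [exact Hw|].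
    apply Rinv_le_contravar; auto; apply Rinv_0_lt_compat; auto. }
  rewrite Rmult_comm; apply Rmult_le_compat_r; [apply Pr_nonneg, (HX (fun v => K * x < v)), borel_gt|exact HGK].
Qed.

Lemma Pr_window_X_above_sqrt t eta :
  asymp_eq (fun x => tail G (x - / x)) (tail G) -> continuity G ->
  (forall Z0, 0 < Z0 -> exists C M, 0 < C /\ forall x, M <= x -> tail (distr Ps X) (x / Z0) <= C * TH x) ->
  0 < t -> 0 < eta -> exists M, forall x, M <= x ->
  Pr Ps (fun w => x - t < X w * Y w <= x /\ sqrt (x - t) < X w) <= eta * TH x.
Proof.
  intros HGshift HGc HFO Ht Heta.
  destruct (Pr_window_Y_large t (eta / 3) HGshift Ht ltac:(lra)) as [Z0 [HZ0 [M3 Hlarge]]].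
  destruct (HFO Z0 ltac:(lra)) as [C [M1 [HC HFC]]].
  set (eps := eta / (3 * C)).
  assert (Heps : 0 < eps) by (apply Rdiv_lt_0_compat; lra).
  destruct (Pr_window_Y_small t eps HGc Heps) as [K0 [HK0 Hsmall]].
  set (K := Rmax K0 (/ Z0)).
  destruct (Pr_window_Y_bounded t Z0 K eps HGc Ht HZ0 (Rmax_r _ _) Heps) as [M2 Hbounded].
  exists (Rmax (Rmax M1 M2) (Rmax M3 1)); intros x Hx.
  pose proof (Rmax_l (Rmax M1 M2) (Rmax M3 1)); pose proof (Rmax_r (Rmax M1 M2) (Rmax M3 1)).
  pose proof (Rmax_l M1 M2); pose proof (Rmax_r M1 M2); pose proof (Rmax_l M3 1); pose proof (Rmax_r M3 1).
  assert (HE : meas Ps (fun w => x - t < X w * Y w <= x)) by (apply meas_window; auto).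
  assert (HXgt : forall r, meas Ps (fun w => r < X w)) by (intros r; apply (HX (fun v => r < v)), borel_gt).
  assert (HXoc : forall r r', meas Ps (fun w => r < X w <= r')) by (intros r r'; apply (HX (fun v => r < v <= r')), borel_oc).
  eapply Rle_trans; [apply Pr_le_add3 with
    (B := fun w => x - t < X w * Y w <= x /\ sqrt (x - t) < X w <= x / Z0)
    (C := fun w => x - t < X w * Y w <= x /\ x / Z0 < X w <= K * x)
    (D := fun w => x - t < X w * Y w <= x /\ K * x < X w); auto using meas_and|].
  { intros w [Hw HXw]; destruct (Rle_or_lt (X w) (x / Z0)); [left; auto|right].
    destruct (Rle_or_lt (X w) (K * x)); [left|right]; auto. }
  specialize (Hlarge x ltac:(lra)); specialize (HFC x ltac:(lra)).
  specialize (Hbounded x ltac:(lra)); specialize (Hsmall K x (Rmax_l _ _) ltac:(lra)).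
  assert (HKx : Pr Ps (fun w => K * x < X w) <= Pr Ps (fun w => x / Z0 < X w)).
  { apply Pr_incl; auto; intros w Hw.
    assert (x / Z0 <= K * x); [|lra].
    assert (1 <= K * Z0) by (apply Rinv_le_mult_ge1, Rmax_r; lra).
    apply Rdiv_le_iff; nra. }
  rewrite (tail_Pr Ps X (rv_meas_le Ps X HX)) in HFC.
  assert (eps * Pr Ps (fun w => x / Z0 < X w) <= eta / 3 * TH x).
  { unfold eps; replace (eta / 3 * TH x) with (eta / (3 * C) * (C * TH x)) by (field; lra).
    apply Rmult_le_compat_l; [left; exact Heps|exact HFC]. }
  assert (eps * Pr Ps (fun w => K * x < X w) <= eps * Pr Ps (fun w => x / Z0 < X w))
    by (apply Rmult_le_compat_l; lra).
  lra.
Qed.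

End Window.

Lemma independent_sym Ps X Y : independent Ps X Y -> independent Ps Y X.
Proof.
  intros H B1 B2 HB1 HB2; rewrite (Pr_ext Ps _ (fun w => B2 (X w) /\ B1 (Y w))) by (intros; tauto).
  rewrite H; auto; ring.
Qed.

Section ProductTail.
Variable Ps : prob_space.
Variables X Y : Omega Ps -> R.
Hypothesis HX : random_variable Ps X.
Hypothesis HY : random_variable Ps Y.
Hypothesis Hind : independent Ps X Y.
Hypothesis HXnn : forall w, 0 <= X w.
Hypothesis HYnn : forall w, 0 <= Y w.

Local Notation TH := (tail (distr Ps (fun w => X w * Y w))).

Lemma prod_comm_fun : (fun w => Y w * X w) = (fun w => X w * Y w).
Proof. apply functional_extensionality; intros; ring. Qed.

Lemma tail_prod_pos : (forall r, 0 < tail (distr Ps X) r) -> (forall r, 0 < tail (distr Ps Y) r) ->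
  forall r, 0 < TH r.
Proof.
  intros HFpos HGpos r; pose proof (Rmax_l 1 r); pose proof (Rmax_r 1 r); set (q := Rmax 1 r) in *.
  rewrite (tail_Pr Ps _ (meas_prod_le Ps X Y HX HY HXnn HYnn)).
  apply Rlt_le_trans with (Pr Ps (fun w => q < X w /\ q < Y w)).
  - rewrite (Hind (fun v => q < v) (fun v => q < v)) by apply borel_gt.
    rewrite <- (tail_Pr Ps X (rv_meas_le Ps X HX)), <- (tail_Pr Ps Y (rv_meas_le Ps Y HY)).
    apply Rmult_lt_0_compat; auto.
  - apply Pr_incl; [apply meas_and; [apply (HX (fun v => q < v))|apply (HY (fun v => q < v))];
                    apply borel_gt|apply meas_prod_gt; auto|].
    intros w [H1 H2]; assert (q * q < X w * Y w) by (apply Rmult_le_0_lt_compat; lra).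
    assert (q <= q * q) by nra; lra.
Qed.

Lemma Pr_window_negligible :
  asymp_eq (fun x => tail (distr Ps X) (x - / x)) (tail (distr Ps X)) ->
  asymp_eq (fun x => tail (distr Ps Y) (x - / x)) (tail (distr Ps Y)) ->
  continuity (distr Ps X) -> continuity (distr Ps Y) ->
  (forall Z0, 0 < Z0 -> exists C M, 0 < C /\ forall x, M <= x -> tail (distr Ps X) (x / Z0) <= C * TH x) ->
  (forall Z0, 0 < Z0 -> exists C M, 0 < C /\ forall x, M <= x -> tail (distr Ps Y) (x / Z0) <= C * TH x) ->
  forall t eta, 0 < t -> 0 < eta -> exists M, forall x, M <= x ->
  Pr Ps (fun w => x - t < X w * Y w <= x) <= eta * TH x.
Proof.
  intros HFshift HGshift HFc HGc HFO HGO t eta Ht Heta.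
  destruct (Pr_window_X_above_sqrt Ps X Y HX HY Hind HXnn HYnn t (eta / 2) HGshift HGc HFO Ht
              ltac:(lra)) as [M1 HM1].
  rewrite <- prod_comm_fun in HGO.
  destruct (Pr_window_X_above_sqrt Ps Y X HY HX (independent_sym Ps X Y Hind) HYnn HXnn t (eta / 2)
              HFshift HFc HGO Ht ltac:(lra)) as [M2 HM2].
  rewrite prod_comm_fun in HM2.
  exists (Rmax (Rmax M1 M2) t); intros x Hx.
  pose proof (Rmax_l (Rmax M1 M2) t); pose proof (Rmax_r (Rmax M1 M2) t).
  pose proof (Rmax_l M1 M2); pose proof (Rmax_r M1 M2).
  specialize (HM1 x ltac:(lra)); specialize (HM2 x ltac:(lra)).
  set (c := sqrt (x - t)) in *.
  assert (Hcc : c * c = x - t) by (apply sqrt_sqrt; lra).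
  assert (Hc : 0 <= c) by apply sqrt_pos.
  (* [X, Y <= c] would force [XY <= c^2 = x - t] *)
  eapply Rle_trans; [apply Pr_le_add with
    (B := fun w => x - t < X w * Y w <= x /\ c < X w) (C := fun w => x - t < Y w * X w <= x /\ c < Y w)|].
  - apply meas_window; auto.
  - apply meas_and; [apply meas_window; auto|apply (HX (fun v => c < v)), borel_gt].
  - apply meas_and; [apply (meas_window Ps Y X); auto|apply (HY (fun v => c < v)), borel_gt].
  - intros w Hw; destruct (Rle_or_lt (X w) c); [destruct (Rle_or_lt (Y w) c)|]; [|right|left]; auto.
    + exfalso; assert (X w * Y w <= c * c) by (apply Rmult_le_compat; auto); lra.
    + rewrite Rmult_comm; auto.
  - lra.
Qed.

End ProductTail.

Theorem theorem3p2 (Ps : prob_space) (X Y : Omega Ps -> R) (a : R -> R)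
  (HXrv : random_variable Ps X) (HYrv : random_variable Ps Y)
  (Hind : independent Ps X Y)
  (HXnn : forall w, 0 <= X w) (HYnn : forall w, 0 <= Y w)
  (HFc : continuity (distr Ps X)) (HGc : continuity (distr Ps Y))
  (HF : asymp_eq (fun x => tail (distr Ps X) (x - / x)) (tail (distr Ps X)))
  (HG : asymp_eq (fun x => tail (distr Ps Y) (x - / x)) (tail (distr Ps Y)))
  (Hapos : forall x, 0 <= x -> 0 < a x)
  (Hamono : nondecr_on_nonneg a) (Hainf : tends_to_infty a)
  (Hxamono : nondecr_on_nonneg (fun x => x / a x))
  (Hxainf : tends_to_infty (fun x => x / a x))
  (HGO : big_O (fun x => tail (distr Ps Y) (a x))
               (tail (distr Ps (fun w => X w * Y w))))
  (HFO : big_O (fun x => tail (distr Ps X) (a x))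
               (tail (distr Ps (fun w => X w * Y w)))) :
  long_tailed (distr Ps (fun w => X w * Y w)).
Proof.
  (* of the hypotheses on [a], only [a > 0] and [x / a x -> oo] are needed *)
  assert (HXle := rv_meas_le Ps X HXrv); assert (HYle := rv_meas_le Ps Y HYrv).
  assert (HXYle := meas_prod_le Ps X Y HXrv HYrv HXnn HYnn).
  assert (HTHpos : forall r, 0 < tail (distr Ps (fun w => X w * Y w)) r).
  { apply tail_prod_pos; auto.
    - apply (shift_equiv_tail_pos _ (tail_antitone Ps X HXle) (tail_nonneg Ps X HXle) HF).
    - apply (shift_equiv_tail_pos _ (tail_antitone Ps Y HYle) (tail_nonneg Ps Y HYle) HG). }
  split; [exact HTHpos|].
  apply asymp_eq_shift_of_increments; [exact HTHpos|apply tail_antitone; auto|].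
  intros t eta Ht Heta.
  destruct (Pr_window_negligible Ps X Y HXrv HYrv Hind HXnn HYnn HF HG HFc HGc) with (t := t) (eta := eta)
    as [M HM]; auto.
  - intros Z0; apply big_O_at_fraction with a; auto using tail_antitone, tail_nonneg.
  - intros Z0; apply big_O_at_fraction with a; auto using tail_antitone, tail_nonneg.
  - exists (Rmax M t); intros x Hx; pose proof (Rmax_l M t); pose proof (Rmax_r M t).
    rewrite <- Pr_oc_tail by (auto; lra); apply HM; lra.
Qed.
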